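(* For terms $L,M$ of the CCV $\lambda\mu$-calculus, if $L=_{ccv}M$ then $[\![L]\!]=[\![M]\!]$ with respect to $\beta\eta$-equality of the $\lambda$-calculus.
   Context: CCV $\lambda\mu$-calculus. Ordinary variables $x,y,z,\dots$ and continuation variables $k,l,\dots$ are disjoint. Terms $M ::= x \mid \lambda x.M \mid MM \mid (M\ \mathsf{where}\ x:=M) \mid \mu k.J$, jumps $J ::= [k]M \mid (J\ \mathsf{where}\ x:=M)$, where $(L\ \mathsf{where}\ x:=M)$ means $\mathsf{let}\ x=M\ \mathsf{in}\ L$ ($x$ bound in $L$ only). Terms are identified up to $\alpha$-conversion and the congruence generated by (E1) $(L\ \mathsf{where}\ x:=(M\ \mathsf{where}\ y:=N))=((L\ \mathsf{where}\ x:=M)\ \mathsf{where}\ y:=N)$ if $y$ not free in $L$; (E2) $((\mu k.J)\ \mathsf{where}\ x:=M)=\mu k.(J\ \mathsf{where}\ x:=M)$ if $k$ not free in $M$; (E3) $[k](L\ \mathsf{where}\ x:=M)=([k]L\ \mathsf{where}\ x:=M)$. Values $V$: variables and $\lambda$-abstractions; $N$ a non-value. $=_{ccv}$ is the smallest congruence containing ($z$ fresh): $NM\to(zM\ \mathsf{where}\ z:=N)$; $VN\to(Vz\ \mathsf{where}\ z:=N)$; $(\lambda x.M)V\to(M\ \mathsf{where}\ x:=V)$; $(M\ \mathsf{where}\ x:=V)\to M\{V/x\}$; $(M\ \mathsf{where}\ x:=\mu k.J)\to\mu k.J\{[k]\square\mapsto[k](M\ \mathsf{where}\ x:=\square)\}$;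 $[l]\mu k.J\to J\{l/k\}$; $\lambda x.Vx\to V$ ($x$ not free in $V$); $(x\ \mathsf{where}\ x:=M)\to M$; $\mu k.[k]M\to M$ ($k$ not free in $M$); the context substitution replaces recursively each subjump $[k]Q$ with $k$ free by $[k](M\ \mathsf{where}\ x:=Q)$, and $J\{l/k\}$ replaces each such $[k]Q$ by $[l]Q$. CPS translation into the $\lambda$-calculus (fresh bound variables, $K$ a $\lambda$-term): $\langle V\rangle[K]=KV^*$; $\langle V_1V_2\rangle[K]=V_1^*V_2^*K$; $\langle VN\rangle[K]=\langle N\rangle[\lambda y.V^*yK]$; $\langle NV\rangle[K]=\langle N\rangle[\lambda x.xV^*K]$; $\langle N_1N_2\rangle[K]=\langle N_1\rangle[\lambda x.\langle N_2\rangle[\lambda y.xyK]]$; $\langle (L\ \mathsf{where}\ x:=M)\rangle[K]=\langle M\rangle[\lambda x.\langle L\rangle[K]]$ (renaming $x$ if free in $K$); $\langle\mu k.J\rangle[K]=(\lambda k.\langle J\rangle)K$; $\langle[k]M\rangle=\langle M\rangle[k]$; $\langle (J\ \mathsf{where}\ x:=M)\rangle=\langle M\rangle[\lambda x.\langle J\rangle]$; $x^*=x$; $(\lambda x.M)^*=\lambda xk.\langle M\rangle[k]$; $[\![M]\!]=\lambda k.\langle M\rangle[k]$, computed from any syntax-tree representative. *)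

From Stdlib Require Import Arith.

(** Ordinary variables and continuation variables live in two SEPARATE de Bruijn
    index spaces.  [Lam M] and the body [L] of [Where L M] bind ordinary index 0;
    [Mu J] binds continuation index 0.  [Where L M] is (L where x := M). *)
Inductive term : Type :=
| Var : nat -> term
| Lam : term -> term
| App : term -> term -> term
| Where : term -> term -> term
| Mu : jump -> term
with jump : Type :=
| Jmp : nat -> term -> jump           (* [k] M *)
| JWhere : jump -> term -> jump.      (* (J where x := M), x bound in J only *)

Definition is_value (M : term) : bool :=
  match M with Var _ | Lam _ => true | _ => false end.

Fixpoint liftO (c : nat) (M : term) : term :=
  match M with
  | Var n => if c <=? n then Var (S n) else Var n
  | Lam M => Lam (liftO (S c) M)
  | App M N => App (liftO c M) (liftO c N)
  | Where L N => Where (liftO (S c) L) (liftO c N)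
  | Mu J => Mu (liftOJ c J)
  end
with liftOJ (c : nat) (J : jump) : jump :=
  match J with
  | Jmp k M => Jmp k (liftO c M)
  | JWhere J N => JWhere (liftOJ (S c) J) (liftO c N)
  end.

Fixpoint liftC (c : nat) (M : term) : term :=
  match M with
  | Var n => Var n
  | Lam M => Lam (liftC c M)
  | App M N => App (liftC c M) (liftC c N)
  | Where L N => Where (liftC c L) (liftC c N)
  | Mu J => Mu (liftCJ (S c) J)
  end
with liftCJ (c : nat) (J : jump) : jump :=
  match J with
  | Jmp k M => Jmp (if c <=? k then S k else k) (liftC c M)
  | JWhere J N => JWhere (liftCJ c J) (liftC c N)
  end.

(** M{V/x}: substitute V for ordinary index d (V already in the current context),
    decrementing ordinary indices above d *)
Fixpoint substO (d : nat) (V : term) (M : term) : term :=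
  match M with
  | Var n => if n =? d then V else if d <? n then Var (pred n) else Var n
  | Lam M => Lam (substO (S d) (liftO 0 V) M)
  | App M N => App (substO d V M) (substO d V N)
  | Where L N => Where (substO (S d) (liftO 0 V) L) (substO d V N)
  | Mu J => Mu (substOJ d (liftC 0 V) J)
  end
with substOJ (d : nat) (V : term) (J : jump) : jump :=
  match J with
  | Jmp k M => Jmp k (substO d V M)
  | JWhere J N => JWhere (substOJ (S d) (liftO 0 V) J) (substO d V N)
  end.

Fixpoint substC (d l : nat) (M : term) : term :=
  match M with
  | Var n => Var n
  | Lam M => Lam (substC d l M)
  | App M N => App (substC d l M) (substC d l N)
  | Where L N => Where (substC d l L) (substC d l N)
  | Mu J => Mu (substCJ (S d) (S l) J)
  end
with substCJ (d l : nat) (J : jump) : jump :=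
  match J with
  | Jmp k M =>
      Jmp (if k =? d then l else if d <? k then pred k else k) (substC d l M)
  | JWhere J N => JWhere (substCJ d l J) (substC d l N)
  end.

(** Context substitution J{[k]Q |-> [k](M where x := Q)} with k = continuation
    index dk.  [M] is the body of the where (its ordinary index 0 is x), already
    placed in the current context. *)
Fixpoint csub (dk : nat) (M : term) (P : term) : term :=
  match P with
  | Var n => Var n
  | Lam P => Lam (csub dk (liftO 1 M) P)
  | App P Q => App (csub dk M P) (csub dk M Q)
  | Where L Q => Where (csub dk (liftO 1 M) L) (csub dk M Q)
  | Mu J => Mu (csubJ (S dk) (liftC 0 M) J)
  end
with csubJ (dk : nat) (M : term) (J : jump) : jump :=
  match J with
  | Jmp k Q =>
      if k =? dk then Jmp k (Where M (csub dk M Q)) else Jmp k (csub dk M Q)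
  | JWhere J Q => JWhere (csubJ dk (liftO 1 M) J) (csub dk M Q)
  end.

(** =_ccv : smallest congruence containing the rules, on syntax trees; the
    identifications alpha (built into de Bruijn) and (E1)-(E3) are included as
    generating equations. *)
Inductive ccv_eq : term -> term -> Prop :=
| ccv_nm : forall N M, is_value N = false ->
    ccv_eq (App N M) (Where (App (Var 0) (liftO 0 M)) N)
| ccv_vn : forall V N, is_value V = true -> is_value N = false ->
    ccv_eq (App V N) (Where (App (liftO 0 V) (Var 0)) N)
| ccv_beta : forall M V, is_value V = true ->
    ccv_eq (App (Lam M) V) (Where M V)
| ccv_let : forall M V, is_value V = true ->
    ccv_eq (Where M V) (substO 0 V M)
| ccv_letmu : forall M J,
    ccv_eq (Where M (Mu J)) (Mu (csubJ 0 (liftC 0 M) J))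
| ccv_eta : forall V, is_value V = true ->
    ccv_eq (Lam (App (liftO 0 V) (Var 0))) V
| ccv_letid : forall M, ccv_eq (Where (Var 0) M) M
| ccv_mueta : forall M, ccv_eq (Mu (Jmp 0 (liftC 0 M))) M
| ccv_E1 : forall L M N,
    ccv_eq (Where L (Where M N)) (Where (Where (liftO 1 L) M) N)
| ccv_E2 : forall J M,
    ccv_eq (Where (Mu J) M) (Mu (JWhere J (liftC 0 M)))
| ccv_refl : forall M, ccv_eq M M
| ccv_sym : forall M N, ccv_eq M N -> ccv_eq N M
| ccv_trans : forall M N P, ccv_eq M N -> ccv_eq N P -> ccv_eq M P
| ccv_Lam : forall M M', ccv_eq M M' -> ccv_eq (Lam M) (Lam M')
| ccv_App : forall M M' N N', ccv_eq M M' -> ccv_eq N N' ->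
    ccv_eq (App M N) (App M' N')
| ccv_Where : forall L L' M M', ccv_eq L L' -> ccv_eq M M' ->
    ccv_eq (Where L M) (Where L' M')
| ccv_Mu : forall J J', ccv_eqJ J J' -> ccv_eq (Mu J) (Mu J')
with ccv_eqJ : jump -> jump -> Prop :=
| ccvJ_mu : forall l J, ccv_eqJ (Jmp l (Mu J)) (substCJ 0 l J)
| ccvJ_E1 : forall L M N,
    ccv_eqJ (JWhere L (Where M N)) (JWhere (JWhere (liftOJ 1 L) M) N)
| ccvJ_E3 : forall k L M, ccv_eqJ (Jmp k (Where L M)) (JWhere (Jmp k L) M)
| ccvJ_refl : forall J, ccv_eqJ J J
| ccvJ_sym : forall J J', ccv_eqJ J J' -> ccv_eqJ J' J
| ccvJ_trans : forall J1 J2 J3, ccv_eqJ J1 J2 -> ccv_eqJ J2 J3 -> ccv_eqJ J1 J3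
| ccvJ_Jmp : forall k M M', ccv_eq M M' -> ccv_eqJ (Jmp k M) (Jmp k M')
| ccvJ_JWhere : forall J J' M M', ccv_eqJ J J' -> ccv_eq M M' ->
    ccv_eqJ (JWhere J M) (JWhere J' M').

Inductive lterm : Type :=
| tVar : nat -> lterm
| tLam : lterm -> lterm
| tApp : lterm -> lterm -> lterm.

Fixpoint tlift (c : nat) (t : lterm) : lterm :=
  match t with
  | tVar n => if c <=? n then tVar (S n) else tVar n
  | tLam t => tLam (tlift (S c) t)
  | tApp t u => tApp (tlift c t) (tlift c u)
  end.

Fixpoint tsubst (d : nat) (u : lterm) (t : lterm) : lterm :=
  match t with
  | tVar n => if n =? d then u else if d <? n then tVar (pred n) else tVar n
  | tLam t => tLam (tsubst (S d) (tlift 0 u) t)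
  | tApp t1 t2 => tApp (tsubst d u t1) (tsubst d u t2)
  end.

Inductive beta_eta : lterm -> lterm -> Prop :=
| be_beta : forall t u, beta_eta (tApp (tLam t) u) (tsubst 0 u t)
| be_eta : forall t, beta_eta (tLam (tApp (tlift 0 t) (tVar 0))) t
| be_refl : forall t, beta_eta t t
| be_sym : forall t u, beta_eta t u -> beta_eta u t
| be_trans : forall t u v, beta_eta t u -> beta_eta u v -> beta_eta t v
| be_Lam : forall t t', beta_eta t t' -> beta_eta (tLam t) (tLam t')
| be_App : forall t t' u u', beta_eta t t' -> beta_eta u u' ->
    beta_eta (tApp t u) (tApp t' u').

(** * CPS translation.
    [cps M s k K] = <M>[K], where [s] (resp. [k]) maps the ordinary (resp.
    continuation) de Bruijn indices of M to target indices; [star] = V^*. *)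
Definition shiftmap (s : nat -> nat) : nat -> nat := fun n => S (s n).
Definition consmap (s : nat -> nat) : nat -> nat :=
  fun n => match n with 0 => 0 | S m => S (s m) end.

Fixpoint star (V : term) (s k : nat -> nat) {struct V} : lterm :=
  match V with
  | Var x => tVar (s x)
  | Lam M =>  (* lambda x k'. <M>[k'] *)
      tLam (tLam (cps M (fun n => match n with 0 => 1 | S m => S (S (s m)) end)
                        (fun n => S (S (k n))) (tVar 0)))
  | _ => tVar 0 (* not used: star is only applied to values *)
  end
with cps (M : term) (s k : nat -> nat) (K : lterm) {struct M} : lterm :=
  match M with
  | Var x => tApp K (tVar (s x))
  | Lam B => tApp K (tLam (tLam (cps B (fun n => match n with 0 => 1 | S m => S (S (s m)) end)
                        (fun n => S (S (k n))) (tVar 0))))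
  | App M1 M2 =>
      match is_value M1, is_value M2 with
      | true, true => tApp (tApp (star M1 s k) (star M2 s k)) K
      | true, false =>  (* <N>[lambda y. V^* y K] *)
          cps M2 s k (tLam (tApp (tApp (tlift 0 (star M1 s k)) (tVar 0)) (tlift 0 K)))
      | false, true =>  (* <N>[lambda x. x V^* K] *)
          cps M1 s k (tLam (tApp (tApp (tVar 0) (tlift 0 (star M2 s k))) (tlift 0 K)))
      | false, false => (* <N1>[lambda x. <N2>[lambda y. x y K]] *)
          cps M1 s k (tLam (cps M2 (shiftmap s) (shiftmap k)
                      (tLam (tApp (tApp (tVar 1) (tVar 0)) (tlift 0 (tlift 0 K))))))
      end
  | Where L N => (* <N>[lambda x. <L>[K]] *)
      cps N s k (tLam (cps L (consmap s) (shiftmap k) (tlift 0 K)))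
  | Mu J => (* (lambda k. <J>) K *)
      tApp (tLam (cpsJ J (shiftmap s) (consmap k))) K
  end
with cpsJ (J : jump) (s k : nat -> nat) {struct J} : lterm :=
  match J with
  | Jmp c M => cps M s k (tVar (k c))
  | JWhere J N => cps N s k (tLam (cpsJ J (consmap s) (shiftmap k)))
  end.

(** [[M]] = lambda k. <M>[k]; free ordinary variable x is sent to target
    variable 2x and free continuation variable k to 2k+1 (disjoint naming). *)
Definition cps_top (M : term) : lterm :=
  tLam (cps M (fun x => S (2 * x)) (fun c => S (2 * c + 1)) (tVar 0)).

(* The translation is generalized to [cps_env], which reads the free ordinary
   and continuation variables of a term in environments of arbitrary
   lambda-terms.  Every syntactic operation used by the rules of =ccv (lifting,
   substitution of a value, renaming of a continuation variable, context
   substitution) then becomes a change of environment, and [cps_env] commutes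
   with lifting and substitution of the target calculus.  With this, each
   generating rule of =ccv becomes a syntactic identity or a few beta/eta steps
   between the translations.  For the congruence rules, <M>[K] respects
   beta-eta equality of K, and the four clauses translating an application all
   agree, up to beta, with the compositional clause
   <N1>[lambda x. <N2>[lambda y. x y K]]. *)

From Stdlib Require Import Arith Lia FunctionalExtensionality.

Arguments Nat.leb : simpl nomatch.
Arguments Nat.eqb : simpl nomatch.

Ltac index_cases :=
  repeat (simpl in *; match goal with
    | |- context [Nat.leb ?a ?b] => destruct (Nat.leb_spec a b)
    | |- context [Nat.eqb ?a ?b] => destruct (Nat.eqb_spec a b)
    | |- context [Nat.ltb ?a ?b] => destruct (Nat.ltb_spec a b)
    end);
  try reflexivity; try lia; try (f_equal; lia).

Lemma tlift_tlift t c d : c <= d -> tlift (S d) (tlift c t) = tlift c (tlift d t).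
Proof.
  revert c d; induction t; intros c d Hcd; simpl.
  - index_cases.
  - f_equal; apply IHt; lia.
  - f_equal; auto.
Qed.

Lemma tlift_tlift0 t c : tlift (S c) (tlift 0 t) = tlift 0 (tlift c t).
Proof. apply tlift_tlift; lia. Qed.

Lemma tsubst_tlift t c u : tsubst c u (tlift c t) = t.
Proof.
  revert c u; induction t; intros c u; simpl.
  - index_cases.
  - f_equal; auto.
  - f_equal; auto.
Qed.

Lemma tlift_tsubst_le t c d u : c <= d ->
  tlift c (tsubst d u t) = tsubst (S d) (tlift c u) (tlift c t).
Proof.
  revert c d u; induction t; intros c d u Hcd; simpl.
  - index_cases.
  - rewrite IHt, tlift_tlift by lia; reflexivity.
  - f_equal; auto.
Qed.

Lemma tlift_tsubst_ge t c d u : d <= c ->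
  tlift c (tsubst d u t) = tsubst d (tlift c u) (tlift (S c) t).
Proof.
  revert c d u; induction t; intros c d u Hdc; simpl.
  - index_cases.
  - rewrite IHt, tlift_tlift0 by lia; reflexivity.
  - f_equal; auto.
Qed.

Lemma tsubst_tlift0 t c u : tsubst (S c) (tlift 0 u) (tlift 0 t) = tlift 0 (tsubst c u t).
Proof. symmetry; apply tlift_tsubst_le; lia. Qed.

Lemma beta_eta_tlift t u c : beta_eta t u -> beta_eta (tlift c t) (tlift c u).
Proof.
  intros H; revert c; induction H; intros c; simpl.
  - rewrite tlift_tsubst_ge by lia; apply be_beta.
  - rewrite tlift_tlift0; apply be_eta.
  - apply be_refl.
  - apply be_sym; auto.
  - eapply be_trans; eauto.
  - apply be_Lam; auto.
  - apply be_App; auto.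
Qed.

Lemma beta_eta_of_eq t u : t = u -> beta_eta t u.
Proof. intros ->; apply be_refl. Qed.

Lemma beta_eta_beta_l t u v : beta_eta (tsubst 0 u t) v -> beta_eta (tApp (tLam t) u) v.
Proof. intros H; eapply be_trans; [apply be_beta | exact H]. Qed.

Lemma beta_eta_beta_r t u v : beta_eta v (tsubst 0 u t) -> beta_eta v (tApp (tLam t) u).
Proof. intros H; eapply be_trans; [exact H | apply be_sym, be_beta]. Qed.

Notation env := (nat -> lterm).

Definition scons (a : lterm) (s : env) : env :=
  fun n => match n with 0 => a | S m => s m end.
Definition env_lift (s : env) : env := fun n => tlift 0 (s n).

Fixpoint star_env (V : term) (s k : env) {struct V} : lterm :=
  match V with
  | Var x => s x
  | Lam B => tLam (tLam (cps_env B (scons (tVar 1) (env_lift (env_lift s)))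
                                   (env_lift (env_lift k)) (tVar 0)))
  | _ => tVar 0 (* junk: [star_env] is only applied to values *)
  end
with cps_env (M : term) (s k : env) (K : lterm) {struct M} : lterm :=
  match M with
  | Var x => tApp K (s x)
  | Lam B => tApp K (tLam (tLam (cps_env B (scons (tVar 1) (env_lift (env_lift s)))
                                           (env_lift (env_lift k)) (tVar 0))))
  | App M1 M2 =>
      match is_value M1, is_value M2 with
      | true, true => tApp (tApp (star_env M1 s k) (star_env M2 s k)) K
      | true, false =>
          cps_env M2 s k (tLam (tApp (tApp (tlift 0 (star_env M1 s k)) (tVar 0)) (tlift 0 K)))
      | false, true =>
          cps_env M1 s k (tLam (tApp (tApp (tVar 0) (tlift 0 (star_env M2 s k))) (tlift 0 K)))
      | false, false =>
          cps_env M1 s k (tLam (cps_env M2 (env_lift s) (env_lift k)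
                      (tLam (tApp (tApp (tVar 1) (tVar 0)) (tlift 0 (tlift 0 K))))))
      end
  | Where L N =>
      cps_env N s k (tLam (cps_env L (scons (tVar 0) (env_lift s)) (env_lift k) (tlift 0 K)))
  | Mu J => tApp (tLam (cpsJ_env J (env_lift s) (scons (tVar 0) (env_lift k)))) K
  end
with cpsJ_env (J : jump) (s k : env) {struct J} : lterm :=
  match J with
  | Jmp c M => cps_env M s k (k c)
  | JWhere J N => cps_env N s k (tLam (cpsJ_env J (scons (tVar 0) (env_lift s)) (env_lift k)))
  end.

Scheme term_ind' := Induction for term Sort Prop
  with jump_ind' := Induction for jump Sort Prop.
Combined Scheme term_jump_ind from term_ind', jump_ind'.

Lemma cps_env_value V s k K : is_value V = true -> cps_env V s k K = tApp K (star_env V s k).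
Proof. destruct V; simpl; easy. Qed.

Lemma star_env_eq {V V' s k s' k' K K'} : cps_env V s k K = cps_env V' s' k' K' ->
  is_value V = true -> is_value V' = true -> star_env V s k = star_env V' s' k'.
Proof. intros Heq HV HV'; rewrite !cps_env_value in Heq by assumption; congruence. Qed.

Definition var_env (s : nat -> nat) : env := fun n => tVar (s n).

Lemma var_env_consmap s : var_env (consmap s) = scons (tVar 0) (env_lift (var_env s)).
Proof. extensionality n; destruct n; reflexivity. Qed.

Lemma cps_as_cps_env_mutual :
  (forall M s k K, cps M s k K = cps_env M (var_env s) (var_env k) K
                   /\ star M s k = star_env M (var_env s) (var_env k)) /\
  (forall J s k, cpsJ J s k = cpsJ_env J (var_env s) (var_env k)).
Proof.
  apply term_jump_ind; intros; simpl.
  - split; reflexivity.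
  - rewrite (proj1 (H _ _ _)).
    replace (var_env (fun n => match n with 0 => 1 | S m => S (S (s m)) end))
      with (scons (tVar 1) (env_lift (env_lift (var_env s))))
      by (extensionality n; destruct n; reflexivity).
    split; reflexivity.
  - split; [|reflexivity].
    rewrite (proj2 (H s k (tVar 0))), (proj2 (H0 s k (tVar 0))).
    destruct (is_value t), (is_value t0);
      rewrite ?(proj1 (H _ _ _)), ?(proj1 (H0 _ _ _)); reflexivity.
  - rewrite (proj1 (H _ _ _)), (proj1 (H0 _ _ _)), var_env_consmap; split; reflexivity.
  - rewrite H, var_env_consmap; split; reflexivity.
  - apply H.
  - rewrite (proj1 (H0 _ _ _)), H, var_env_consmap; reflexivity.
Qed.

Lemma cps_top_as_cps_env M :
  cps_top M = tLam (cps_env M (var_env (fun x => S (2 * x)))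
                              (var_env (fun c => S (2 * c + 1))) (tVar 0)).
Proof. unfold cps_top; rewrite (proj1 (proj1 cps_as_cps_env_mutual M _ _ _)); reflexivity. Qed.

(* [f i] stands for a structural map such as [tlift c] or [tsubst c u];
   [up] is the change of parameter under a binder. *)
Section Traversal.

Variable I : Type.
Variable up : I -> I.
Variable f : I -> lterm -> lterm.
Hypothesis f_tApp : forall i t u, f i (tApp t u) = tApp (f i t) (f i u).
Hypothesis f_tLam : forall i t, f i (tLam t) = tLam (f (up i) t).
Hypothesis f_tVar0 : forall i, f (up i) (tVar 0) = tVar 0.
Hypothesis f_tlift : forall i t, f (up i) (tlift 0 t) = tlift 0 (f i t).

Lemma f_tVar1 i : f (up (up i)) (tVar 1) = tVar 1.
Proof. change (tVar 1) with (tlift 0 (tVar 0)); rewrite f_tlift, f_tVar0; reflexivity. Qed.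

Lemma f_scons_env_lift i a s : f (up i) a = a ->
  (fun n => f (up i) (scons a (env_lift s) n)) = scons a (env_lift (fun n => f i (s n))).
Proof. intros Ha; extensionality n; destruct n; [exact Ha | apply f_tlift]. Qed.

Lemma f_env_lift i s : (fun n => f (up i) (env_lift s n)) = env_lift (fun n => f i (s n)).
Proof. extensionality n; apply f_tlift. Qed.

Lemma f_star_env V i s k : is_value V = true ->
  f i (cps_env V s k (tVar 0)) =
    cps_env V (fun n => f i (s n)) (fun n => f i (k n)) (f i (tVar 0)) ->
  f i (star_env V s k) = star_env V (fun n => f i (s n)) (fun n => f i (k n)).
Proof. intros HV; rewrite !cps_env_value, f_tApp by exact HV; congruence. Qed.

Lemma cps_traversal_mutual :
  (forall M i s k K, f i (cps_env M s k K) =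
     cps_env M (fun n => f i (s n)) (fun n => f i (k n)) (f i K)) /\
  (forall J i s k, f i (cpsJ_env J s k) =
     cpsJ_env J (fun n => f i (s n)) (fun n => f i (k n))).
Proof.
  apply term_jump_ind; intros; simpl;
    [| | destruct (is_value t) eqn:E, (is_value t0) eqn:E0 | ..];
    repeat rewrite ?H, ?H0, ?f_tApp, ?f_tLam, ?f_tVar0, ?f_tVar1, ?f_tlift, ?f_env_lift,
      ?(f_scons_env_lift (up _) (tVar 1)), ?(f_scons_env_lift _ (tVar 0)),
      ?(f_star_env t), ?(f_star_env t0) by auto using f_tVar1;
    reflexivity.
Qed.

Lemma cps_env_traversal M i s k K : f i (cps_env M s k K) =
  cps_env M (fun n => f i (s n)) (fun n => f i (k n)) (f i K).
Proof. apply cps_traversal_mutual. Qed.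

Lemma cpsJ_env_traversal J i s k :
  f i (cpsJ_env J s k) = cpsJ_env J (fun n => f i (s n)) (fun n => f i (k n)).
Proof. apply cps_traversal_mutual. Qed.

Lemma star_env_traversal V i s k : is_value V = true ->
  f i (star_env V s k) = star_env V (fun n => f i (s n)) (fun n => f i (k n)).
Proof. intros HV; apply f_star_env, (proj1 cps_traversal_mutual); exact HV. Qed.

End Traversal.

Lemma cps_env_tlift M s k K c : tlift c (cps_env M s k K) =
  cps_env M (fun n => tlift c (s n)) (fun n => tlift c (k n)) (tlift c K).
Proof. apply (cps_env_traversal nat S); intros; reflexivity || apply tlift_tlift0. Qed.

Lemma cpsJ_env_tlift J s k c :
  tlift c (cpsJ_env J s k) = cpsJ_env J (fun n => tlift c (s n)) (fun n => tlift c (k n)).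
Proof. apply (cpsJ_env_traversal nat S); intros; reflexivity || apply tlift_tlift0. Qed.

Lemma star_env_tlift V s k c : is_value V = true ->
  tlift c (star_env V s k) = star_env V (fun n => tlift c (s n)) (fun n => tlift c (k n)).
Proof. apply (star_env_traversal nat S); intros; reflexivity || apply tlift_tlift0. Qed.

Lemma star_env_env_lift V s k : is_value V = true ->
  star_env V (env_lift s) (env_lift k) = tlift 0 (star_env V s k).
Proof. intros HV; symmetry; apply star_env_tlift, HV. Qed.

Definition tsubst_up (p : nat * lterm) : nat * lterm := (S (fst p), tlift 0 (snd p)).

Lemma cps_env_tsubst M s k K c u : tsubst c u (cps_env M s k K) =
  cps_env M (fun n => tsubst c u (s n)) (fun n => tsubst c u (k n)) (tsubst c u K).
Proof.
  refine (cps_env_traversal _ tsubst_up (fun p => tsubst (fst p) (snd p)) _ _ _ _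
            M (c, u) s k K);
    intros; reflexivity || apply tsubst_tlift0.
Qed.

Lemma cpsJ_env_tsubst J s k c u : tsubst c u (cpsJ_env J s k) =
  cpsJ_env J (fun n => tsubst c u (s n)) (fun n => tsubst c u (k n)).
Proof.
  refine (cpsJ_env_traversal _ tsubst_up (fun p => tsubst (fst p) (snd p)) _ _ _ _
            J (c, u) s k);
    intros; reflexivity || apply tsubst_tlift0.
Qed.

Lemma tsubst_env_lift u s : (fun n => tsubst 0 u (env_lift s n)) = s.
Proof. extensionality n; apply tsubst_tlift. Qed.

Lemma tsubst_scons_env_lift u s :
  (fun n => tsubst 0 u (scons (tVar 0) (env_lift s) n)) = scons u s.
Proof. extensionality n; destruct n; [reflexivity | apply tsubst_tlift]. Qed.

Lemma cps_env_beta_where M s k K u :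
  tsubst 0 u (cps_env M (scons (tVar 0) (env_lift s)) (env_lift k) (tlift 0 K)) =
  cps_env M (scons u s) k K.
Proof. rewrite cps_env_tsubst, tsubst_scons_env_lift, tsubst_env_lift, tsubst_tlift; reflexivity. Qed.

Definition env_drop (c : nat) (s : env) : env := fun n => s (if c <=? n then S n else n).
Definition env_insert (d : nat) (a : lterm) (s : env) : env :=
  fun n => if n =? d then a else s (if d <? n then pred n else n).
Definition env_update (d : nat) (a : lterm) (s : env) : env :=
  fun n => if n =? d then a else s n.

Lemma env_drop_0_scons a s : env_drop 0 (scons a s) = s.
Proof. reflexivity. Qed.

Lemma env_drop_scons c a s : env_drop (S c) (scons a s) = scons a (env_drop c s).
Proof. extensionality n; destruct n; unfold env_drop; simpl; [|destruct (c <=? n)]; reflexivity. Qed.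

Lemma env_insert_0 a s : env_insert 0 a s = scons a s.
Proof. extensionality n; destruct n; reflexivity. Qed.

Lemma env_insert_scons d a b s : env_insert (S d) a (scons b s) = scons b (env_insert d a s).
Proof.
  extensionality n; destruct n as [|n]; unfold env_insert; [reflexivity|].
  index_cases; destruct n; [lia | reflexivity].
Qed.

Lemma env_lift_insert d a s : env_lift (env_insert d a s) = env_insert d (tlift 0 a) (env_lift s).
Proof. extensionality n; unfold env_lift, env_insert; destruct (n =? d); reflexivity. Qed.

Lemma env_update_scons d a b s : env_update (S d) a (scons b s) = scons b (env_update d a s).
Proof. extensionality n; destruct n; reflexivity. Qed.

Lemma env_lift_update d a s : env_lift (env_update d a s) = env_update d (tlift 0 a) (env_lift s).
Proof. extensionality n; unfold env_lift, env_update; destruct (n =? d); reflexivity. Qed.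

Ltac env_simpl :=
  rewrite ?env_drop_0_scons, ?env_drop_scons, ?env_insert_scons, ?env_lift_insert,
    ?env_update_scons, ?env_lift_update.

Ltac env_ext :=
  let n := fresh "n" in
  extensionality n; destruct n; unfold env_lift, env_drop; simpl;
  repeat rewrite ?tsubst_tlift0, ?tsubst_tlift, ?tlift_tlift0; reflexivity.

Lemma is_value_liftO M c : is_value (liftO c M) = is_value M.
Proof. destruct M; simpl; try reflexivity; destruct (c <=? n); reflexivity. Qed.

Lemma is_value_liftC M c : is_value (liftC c M) = is_value M.
Proof. destruct M; reflexivity. Qed.

Lemma is_value_substC M d l : is_value (substC d l M) = is_value M.
Proof. destruct M; reflexivity. Qed.

Lemma is_value_csub M d N : is_value (csub d N M) = is_value M.
Proof. destruct M; reflexivity. Qed.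

Lemma is_value_substO M d V : is_value V = true -> is_value (substO d V M) = is_value M.
Proof.
  destruct M; simpl; intros HV; try reflexivity.
  destruct (n =? d); [exact HV|]; destruct (d <? n); reflexivity.
Qed.

Ltac is_value_simpl :=
  rewrite ?is_value_liftO, ?is_value_liftC, ?is_value_substC, ?is_value_csub,
    ?is_value_substO by assumption.

(* Application case of the commutation lemmas below; IH1 and IH2 are the
   induction hypotheses for the subterms t1 and t2, and also yield the
   equations for their [star_env] when they are values. *)
Ltac app_case IH1 IH2 t1 t2 :=
  is_value_simpl;
  let E1 := fresh "E" in let E2 := fresh "E" in
  destruct (is_value t1) eqn:E1, (is_value t2) eqn:E2;
  rewrite ?(star_env_eq (IH1 _ _ (tVar 0))), ?(star_env_eq (IH2 _ _ (tVar 0)))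
    by (is_value_simpl; assumption);
  rewrite ?IH1, ?IH2; try reflexivity.

Lemma cps_liftO_mutual :
  (forall M c s k K, cps_env (liftO c M) s k K = cps_env M (env_drop c s) k K) /\
  (forall J c s k, cpsJ_env (liftOJ c J) s k = cpsJ_env J (env_drop c s) k).
Proof.
  apply term_jump_ind; intros; simpl.
  - unfold env_drop; destruct (c <=? n); reflexivity.
  - rewrite H; env_simpl; reflexivity.
  - app_case (H c) (H0 c) t t0.
  - rewrite H, H0; env_simpl; reflexivity.
  - rewrite H; reflexivity.
  - rewrite H; reflexivity.
  - rewrite H, H0; env_simpl; reflexivity.
Qed.

Lemma cps_env_liftO M c s k K : cps_env (liftO c M) s k K = cps_env M (env_drop c s) k K.
Proof. apply cps_liftO_mutual. Qed.

Lemma cpsJ_env_liftO J c s k : cpsJ_env (liftOJ c J) s k = cpsJ_env J (env_drop c s) k.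
Proof. apply cps_liftO_mutual. Qed.

Lemma star_env_liftO V c s k : is_value V = true ->
  star_env (liftO c V) s k = star_env V (env_drop c s) k.
Proof.
  intros HV; apply (star_env_eq (cps_env_liftO V c s k (tVar 0))); [rewrite is_value_liftO|]; exact HV.
Qed.

Lemma cps_liftC_mutual :
  (forall M c s k K, cps_env (liftC c M) s k K = cps_env M s (env_drop c k) K) /\
  (forall J c s k, cpsJ_env (liftCJ c J) s k = cpsJ_env J s (env_drop c k)).
Proof.
  apply term_jump_ind; intros; simpl.
  - reflexivity.
  - rewrite H; reflexivity.
  - app_case (H c) (H0 c) t t0.
  - rewrite H, H0; reflexivity.
  - rewrite H; env_simpl; reflexivity.
  - rewrite H; unfold env_drop; destruct (c <=? n); reflexivity.
  - rewrite H, H0; reflexivity.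
Qed.

Lemma cps_env_liftC M c s k K : cps_env (liftC c M) s k K = cps_env M s (env_drop c k) K.
Proof. apply cps_liftC_mutual. Qed.

Lemma star_env_liftC V c s k : is_value V = true ->
  star_env (liftC c V) s k = star_env V s (env_drop c k).
Proof.
  intros HV; apply (star_env_eq (cps_env_liftC V c s k (tVar 0))); [rewrite is_value_liftC|]; exact HV.
Qed.

Lemma cps_substC_mutual :
  (forall M d l s k K, cps_env (substC d l M) s k K = cps_env M s (env_insert d (k l) k) K) /\
  (forall J d l s k, cpsJ_env (substCJ d l J) s k = cpsJ_env J s (env_insert d (k l) k)).
Proof.
  apply term_jump_ind; intros; simpl.
  - reflexivity.
  - rewrite H; env_simpl; reflexivity.
  - app_case (H d l) (H0 d l) t t0; env_simpl; reflexivity.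
  - rewrite H, H0; env_simpl; reflexivity.
  - rewrite H; env_simpl; reflexivity.
  - rewrite H; unfold env_insert; destruct (n =? d); [|destruct (d <? n)]; reflexivity.
  - rewrite H, H0; env_simpl; reflexivity.
Qed.

Lemma cps_substO_mutual :
  (forall M d V, is_value V = true -> forall s k K,
     cps_env (substO d V M) s k K = cps_env M (env_insert d (star_env V s k) s) k K) /\
  (forall J d V, is_value V = true -> forall s k,
     cpsJ_env (substOJ d V J) s k = cpsJ_env J (env_insert d (star_env V s k) s) k).
Proof.
  apply term_jump_ind;
    [intros n d V HV s k K | intros t IH d V HV s k K
    | intros t IH t0 IH0 d V HV s k K | intros t IH t0 IH0 d V HV s k K
    | intros j IH d V HV s k K | intros n t IH d V HV s k | intros j IH t IH0 d V HV s k];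
    simpl.
  1: { unfold env_insert; destruct (n =? d); [apply cps_env_value, HV|].
       destruct (d <? n); reflexivity. }
  2: { app_case (IH d V HV) (IH0 d V HV) t t0.
       rewrite star_env_env_lift by exact HV; env_simpl; reflexivity. }
  all: rewrite ?IH, ?IH0 by (is_value_simpl; assumption);
    rewrite ?star_env_liftO, ?star_env_liftC, ?env_drop_0_scons, ?star_env_env_lift by exact HV;
    env_simpl; reflexivity.
Qed.

(* The target continuation lambda x. <N>[k_c], which context substitution
   installs for the continuation variable c: it translates [c](N where x := _). *)
Definition where_cont (N : term) (s k : env) (c : nat) : lterm :=
  tLam (cps_env N (scons (tVar 0) (env_lift s)) (env_lift k) (tlift 0 (k c))).

Lemma where_cont_liftO N a s k c : where_cont (liftO 1 N) (scons a s) k c = where_cont N s k c.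
Proof. unfold where_cont; rewrite cps_env_liftO, env_drop_scons; reflexivity. Qed.

Lemma where_cont_liftC N s a k c :
  where_cont (liftC 0 N) s (scons a k) (S c) = where_cont N s k c.
Proof. unfold where_cont; rewrite cps_env_liftC; reflexivity. Qed.

Lemma where_cont_env_lift N s k c :
  where_cont N (env_lift s) (env_lift k) c = tlift 0 (where_cont N s k c).
Proof. unfold where_cont; simpl; rewrite cps_env_tlift, tlift_tlift0; repeat f_equal; env_ext. Qed.

Lemma cps_csub_mutual :
  (forall M dk N s k K, cps_env (csub dk N M) s k K =
     cps_env M s (env_update dk (where_cont N s k dk) k) K) /\
  (forall J dk N s k, cpsJ_env (csubJ dk N J) s k =
     cpsJ_env J s (env_update dk (where_cont N s k dk) k)).
Proof.
  apply term_jump_ind; intros; simpl.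
  - reflexivity.
  - rewrite H, where_cont_liftO, !where_cont_env_lift; env_simpl; reflexivity.
  - app_case (H dk N) (H0 dk N) t t0; rewrite where_cont_env_lift; env_simpl; reflexivity.
  - rewrite H, H0, where_cont_liftO, where_cont_env_lift; env_simpl; reflexivity.
  - rewrite H, where_cont_liftC, where_cont_env_lift; env_simpl; reflexivity.
  - destruct (Nat.eqb_spec n dk) as [->|Hn]; simpl; rewrite H; f_equal; unfold env_update.
    + rewrite Nat.eqb_refl; reflexivity.
    + apply Nat.eqb_neq in Hn; rewrite Hn; reflexivity.
  - rewrite H, H0, where_cont_liftO, where_cont_env_lift; env_simpl; reflexivity.
Qed.

Lemma cps_env_cont_beta_eta M s k K K' :
  beta_eta K K' -> beta_eta (cps_env M s k K) (cps_env M s k K').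
Proof.
  revert s k K K'; induction M; intros s k K K' HK; simpl.
  - apply be_App; [exact HK | apply be_refl].
  - apply be_App; [exact HK | apply be_refl].
  - destruct (is_value M1), (is_value M2).
    + apply be_App; [apply be_refl | exact HK].
    + apply IHM2, be_Lam, be_App; [apply be_refl | apply beta_eta_tlift, HK].
    + apply IHM1, be_Lam, be_App; [apply be_refl | apply beta_eta_tlift, HK].
    + apply IHM1, be_Lam, IHM2, be_Lam, be_App;
        [apply be_refl | apply beta_eta_tlift, beta_eta_tlift, HK].
  - apply IHM2, be_Lam, IHM1, beta_eta_tlift, HK.
  - apply be_App; [apply be_refl | exact HK].
Qed.

Definition cps_env_app (M1 M2 : term) (s k : env) (K : lterm) : lterm :=
  cps_env M1 s k (tLam (cps_env M2 (env_lift s) (env_lift k)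
    (tLam (tApp (tApp (tVar 1) (tVar 0)) (tlift 0 (tlift 0 K)))))).

Lemma cps_env_App M1 M2 s k K :
  beta_eta (cps_env (App M1 M2) s k K) (cps_env_app M1 M2 s k K).
Proof.
  unfold cps_env_app; simpl.
  destruct (is_value M1) eqn:HM1.
  - rewrite (cps_env_value M1) by exact HM1.
    apply be_sym, beta_eta_beta_l; simpl.
    rewrite cps_env_tsubst, !tsubst_env_lift; simpl; rewrite tsubst_tlift0, !tsubst_tlift.
    destruct (is_value M2) eqn:HM2; [|apply be_refl].
    rewrite cps_env_value by exact HM2.
    apply beta_eta_beta_l; simpl; rewrite !tsubst_tlift; apply be_refl.
  - destruct (is_value M2) eqn:HM2; [|apply be_refl].
    apply cps_env_cont_beta_eta, be_Lam; rewrite cps_env_value by exact HM2.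
    apply be_sym, beta_eta_beta_l; simpl.
    rewrite tsubst_tlift, star_env_env_lift by exact HM2; apply be_refl.
Qed.

Lemma cps_env_App_nonvalue_l N M s k K : is_value N = false ->
  cps_env (App N M) s k K = cps_env (Where (App (Var 0) (liftO 0 M)) N) s k K.
Proof.
  intros HN; simpl; rewrite HN, is_value_liftO.
  destruct (is_value M) eqn:HM.
  - rewrite star_env_liftO, env_drop_0_scons, star_env_env_lift by exact HM; reflexivity.
  - rewrite cps_env_liftO, env_drop_0_scons; reflexivity.
Qed.

Lemma cps_env_App_nonvalue_r V N s k K : is_value V = true -> is_value N = false ->
  cps_env (App V N) s k K = cps_env (Where (App (liftO 0 V) (Var 0)) N) s k K.
Proof.
  intros HV HN; simpl; rewrite HV, HN, is_value_liftO, HV.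
  rewrite star_env_liftO, env_drop_0_scons, star_env_env_lift by exact HV; reflexivity.
Qed.

Lemma cps_env_beta M V s k K : is_value V = true ->
  beta_eta (cps_env (App (Lam M) V) s k K) (cps_env (Where M V) s k K).
Proof.
  intros HV; simpl; rewrite HV, (cps_env_value V) by exact HV.
  apply beta_eta_beta_r; rewrite cps_env_beta_where.
  eapply be_trans; [apply be_App; [apply be_beta | apply be_refl]|]; simpl.
  apply beta_eta_beta_l, beta_eta_of_eq; simpl; rewrite !cps_env_tsubst; simpl.
  f_equal; env_ext.
Qed.

Lemma cps_env_let M V s k K : is_value V = true ->
  beta_eta (cps_env (Where M V) s k K) (cps_env (substO 0 V M) s k K).
Proof.
  intros HV; simpl; rewrite (cps_env_value V) by exact HV.
  apply beta_eta_beta_l, beta_eta_of_eq.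
  rewrite cps_env_beta_where, (proj1 cps_substO_mutual), env_insert_0 by exact HV.
  reflexivity.
Qed.

Lemma cps_env_let_mu M J s k K :
  beta_eta (cps_env (Where M (Mu J)) s k K) (cps_env (Mu (csubJ 0 (liftC 0 M) J)) s k K).
Proof.
  simpl; apply beta_eta_beta_l, beta_eta_beta_r, beta_eta_of_eq.
  rewrite (proj2 cps_csub_mutual), !cpsJ_env_tsubst, !tsubst_env_lift, tsubst_scons_env_lift.
  f_equal; extensionality n; destruct n; simpl; [|symmetry; apply tsubst_tlift].
  unfold where_cont; simpl; rewrite cps_env_liftC, cps_env_tsubst; f_equal; f_equal; env_ext.
Qed.

Lemma cps_env_eta V s k K : is_value V = true ->
  beta_eta (cps_env (Lam (App (liftO 0 V) (Var 0))) s k K) (cps_env V s k K).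
Proof.
  intros HV; simpl; rewrite is_value_liftO, HV, (cps_env_value V) by exact HV.
  rewrite star_env_liftO, env_drop_0_scons, !star_env_env_lift by exact HV.
  apply be_App; [apply be_refl|].
  eapply be_trans; [apply be_Lam, (be_eta (tApp (tlift 0 (star_env V s k)) (tVar 0))) | apply be_eta].
Qed.

Lemma cps_env_let_id M s k K : beta_eta (cps_env (Where (Var 0) M) s k K) (cps_env M s k K).
Proof. simpl; apply cps_env_cont_beta_eta, be_eta. Qed.

Lemma cps_env_mu_eta M s k K :
  beta_eta (cps_env (Mu (Jmp 0 (liftC 0 M))) s k K) (cps_env M s k K).
Proof.
  simpl; apply beta_eta_beta_l, beta_eta_of_eq.
  rewrite cps_env_liftC, env_drop_0_scons, cps_env_tsubst, !tsubst_env_lift; reflexivity.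
Qed.

Lemma cps_env_where_assoc L M N s k K :
  cps_env (Where L (Where M N)) s k K = cps_env (Where (Where (liftO 1 L) M) N) s k K.
Proof. simpl; rewrite cps_env_liftO, cps_env_tlift, tlift_tlift0; repeat f_equal; env_ext. Qed.

Lemma cps_env_where_mu J M s k K :
  beta_eta (cps_env (Where (Mu J) M) s k K) (cps_env (Mu (JWhere J (liftC 0 M))) s k K).
Proof.
  simpl; eapply be_trans; [apply cps_env_cont_beta_eta, be_Lam, be_beta|].
  apply beta_eta_beta_r, beta_eta_of_eq.
  rewrite cps_env_liftC, env_drop_0_scons, cps_env_tsubst, !tsubst_env_lift; simpl.
  rewrite !cpsJ_env_tsubst; repeat f_equal; env_ext.
Qed.

Lemma cpsJ_env_jump_mu l J s k :
  beta_eta (cpsJ_env (Jmp l (Mu J)) s k) (cpsJ_env (substCJ 0 l J) s k).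
Proof.
  simpl; apply beta_eta_beta_l, beta_eta_of_eq.
  rewrite cpsJ_env_tsubst, tsubst_env_lift, tsubst_scons_env_lift, (proj2 cps_substC_mutual),
    env_insert_0.
  reflexivity.
Qed.

Lemma cpsJ_env_where_assoc L M N s k :
  cpsJ_env (JWhere L (Where M N)) s k = cpsJ_env (JWhere (JWhere (liftOJ 1 L) M) N) s k.
Proof. simpl; rewrite cpsJ_env_liftO, cpsJ_env_tlift; repeat f_equal; env_ext. Qed.

Scheme ccv_eq_ind' := Induction for ccv_eq Sort Prop
  with ccv_eqJ_ind' := Induction for ccv_eqJ Sort Prop.
Combined Scheme ccv_eq_mutind from ccv_eq_ind', ccv_eqJ_ind'.

Lemma cps_env_ccv_mutual :
  (forall L M, ccv_eq L M -> forall s k K, beta_eta (cps_env L s k K) (cps_env M s k K)) /\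
  (forall J J', ccv_eqJ J J' -> forall s k, beta_eta (cpsJ_env J s k) (cpsJ_env J' s k)).
Proof.
  apply ccv_eq_mutind; intros.
  - apply beta_eta_of_eq, cps_env_App_nonvalue_l; assumption.
  - apply beta_eta_of_eq, cps_env_App_nonvalue_r; assumption.
  - apply cps_env_beta; assumption.
  - apply cps_env_let; assumption.
  - apply cps_env_let_mu.
  - apply cps_env_eta; assumption.
  - apply cps_env_let_id.
  - apply cps_env_mu_eta.
  - apply beta_eta_of_eq, cps_env_where_assoc.
  - apply cps_env_where_mu.
  - apply be_refl.
  - apply be_sym; auto.
  - eapply be_trans; eauto.
  - simpl; apply be_App, be_Lam, be_Lam; auto using be_refl.
  - eapply be_trans; [apply cps_env_App|].
    eapply be_trans; [|apply be_sym, cps_env_App].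
    eapply be_trans; [apply H|].
    apply cps_env_cont_beta_eta, be_Lam, H0.
  - simpl; eapply be_trans; [apply H0|]; apply cps_env_cont_beta_eta, be_Lam, H.
  - simpl; apply be_App; [apply be_Lam, H | apply be_refl].
  - apply cpsJ_env_jump_mu.
  - apply beta_eta_of_eq, cpsJ_env_where_assoc.
  - apply be_refl.
  - apply be_refl.
  - apply be_sym; auto.
  - eapply be_trans; eauto.
  - apply H.
  - simpl; eapply be_trans; [apply H0|]; apply cps_env_cont_beta_eta, be_Lam, H.
Qed.

Theorem proposition1p15 : forall L M : term,
  ccv_eq L M -> beta_eta (cps_top L) (cps_top M).
Proof.
  intros L M HLM; rewrite !cps_top_as_cps_env.
  apply be_Lam, (proj1 cps_env_ccv_mutual), HLM.
Qed.
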